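(* For all integers $d\ge2$ and $k\ge2$ there is an instance $H$ of the MAX-$k$-local Hamiltonian problem on qudits of dimension $d$, with optimal value $\mathrm{OPT}>0$, such that every product state assignment $\sigma=\sigma_1\otimes\cdots\otimes\sigma_n$ has value $\mathrm{Tr}(H\sigma)\le \mathrm{OPT}/d^{\lfloor k/2\rfloor}$. In particular, for $k=2$ the bound $\mathrm{OPT}/d^{k-1}$ achievable by product states is tight.
   Context: MAX-$k$-local Hamiltonian on $d$-level systems (qudits): an instance on $n$ qudits (Hilbert space $(\mathbb{C}^d)^{\otimes n}$) consists of one Hermitian matrix $H_{i_1,\ldots,i_k}$ for each $k$-element subset $\{i_1,\ldots,i_k\}$ of the qudits; each $H_{i_1,\ldots,i_k}$ acts nontrivially only on those $k$ qudits, is positive semidefinite, and has operator norm at most $1$. Put $H=\sum H_{i_1,\ldots,i_k}$. An assignment is any state $\rho$ on the $n$ qudits, with value $\mathrm{Tr}(H\rho)$; $\mathrm{OPT}$ is the largest eigenvalue of $H$. *)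

From HB Require Import structures.
From mathcomp Require Import all_boot all_order all_algebra.
From mathcomp Require Import reals.
From mathcomp Require Export complex.
Set Implicit Arguments. Unset Strict Implicit. Unset Printing Implicit Defensive.
Import Order.TTheory GRing.Theory Num.Theory.
Local Open Scope ring_scope.

Section Qudits.
Variable R : realType.
Local Notation C := R[i].

Definition adj {m n} (A : 'M[C]_(m, n)) : 'M[C]_(n, m) := (map_mx Num.conj A)^T.

Definition hermitian {n} (A : 'M[C]_n) : Prop := adj A = A.

Definition psd {n} (A : 'M[C]_n) : Prop :=
  hermitian A /\ forall v : 'cV[C]_n, 0 <= (adj v *m A *m v) 0 0.

Definition opnorm_le1 {n} (A : 'M[C]_n) : Prop :=
  forall v : 'cV[C]_n, (adj (A *m v) *m (A *m v)) 0 0 <= (adj v *m v) 0 0.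

Definition density {n} (A : 'M[C]_n) : Prop := psd A /\ \tr A = 1.

Definition largest_eigenvalue {n} (A : 'M[C]_n) (a : C) : Prop :=
  eigenvalue A a /\ forall b, eigenvalue A b -> b <= a.

End Qudits.

(* Computational basis of (C^d)^{\otimes n}: configurations x : 'I_n -> 'I_d. *)
Definition conf (d n : nat) := {ffun 'I_n -> 'I_d}.
Definition qdim (d n : nat) : nat := #|{: conf d n}|.
Definition cf {d n : nat} (i : 'I_(qdim d n)) : conf d n := enum_val i.

Section Local.
Variable R : realType.
Local Notation C := R[i].

Definition agree_out {d n} (S : {set 'I_n}) (x y : conf d n) : bool :=
  [forall j, (j \notin S) ==> (x j == y j)].
Definition agree_in {d n} (S : {set 'I_n}) (x y : conf d n) : bool :=
  [forall j, (j \in S) ==> (x j == y j)].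

(* A acts nontrivially only on the qudits in S, i.e. A = a_S \otimes Id_{S^c}:
   the matrix entry <x|A|y> vanishes unless x,y agree outside S, and otherwise
   depends only on the restrictions of x and y to S. *)
Definition acts_only_on {d n} (S : {set 'I_n}) (A : 'M[C]_(qdim d n)) : Prop :=
  (forall i j, ~~ agree_out S (cf i) (cf j) -> A i j = 0) /\
  (forall i j i' j', agree_out S (cf i) (cf j) -> agree_out S (cf i') (cf j') ->
     agree_in S (cf i) (cf i') -> agree_in S (cf j) (cf j') -> A i j = A i' j').

(* An instance of MAX-k-local Hamiltonian on n qudits of dimension d:
   one term h S for each k-element subset S of the qudits. *)
Definition klocal_instance {d n} (k : nat) (h : {set 'I_n} -> 'M[C]_(qdim d n)) : Prop :=
  forall S : {set 'I_n}, #|S| = k ->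
    [/\ acts_only_on S (h S), psd (h S) & opnorm_le1 (h S)].

Definition hamiltonian {d n} (k : nat) (h : {set 'I_n} -> 'M[C]_(qdim d n)) :
  'M[C]_(qdim d n) := \sum_(S : {set 'I_n} | #|S| == k) h S.

Definition product_state {d n} (s : 'I_n -> 'M[C]_d) : 'M[C]_(qdim d n) :=
  \matrix_(i, j) \prod_(q < n) s q (cf i q) (cf j q).

End Local.

(* Use k qudits, split into two blocks of m = k/2 qudits and, for odd k, one
   spare qudit.  The single term is the projector onto
   |psi> = d^(-m/2) sum_a |a>|a>|0>, which pairs each qudit of the first block
   with its partner in the second; as a projector it is PSD of norm 1 and has
   largest eigenvalue OPT = 1.  On a product state its value factorises as
   d^(-m) prod_j Tr(s_j t_j^T) times a diagonal entry of the spare qudit, and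
   every factor is at most 1 because Tr(rho sigma) <= 1 for states. *)
From HB Require Import structures.
From mathcomp Require Import all_boot all_order all_algebra.
From mathcomp Require Import reals complex spectral sesquilinear.
From mathcomp Require Import ring.
Import Order.TTheory GRing.Theory Num.Theory.
Local Open Scope ring_scope.
Set Implicit Arguments. Unset Strict Implicit. Unset Printing Implicit Defensive.

Section States.
Variable R : realType.
Local Notation C := R[i].

Lemma adjE m n (A : 'M[C]_(m, n)) : adj A = (A ^t* )%sesqui.
Proof. by rewrite /adj map_trmx. Qed.

Lemma adjM m n p (A : 'M[C]_(m, n)) (B : 'M[C]_(n, p)) :
  adj (A *m B) = adj B *m adj A.
Proof. by rewrite /adj map_mxM trmx_mul. Qed.

Lemma unitarymx_adj n (P : 'M[C]_n) :
  P \is unitarymx -> P *m adj P = 1%:M /\ adj P *m P = 1%:M.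
Proof.
move=> Pu; rewrite adjE; split; first exact/unitarymxP.
by rewrite -invmx_unitary // mulVmx // unitarymx_unit.
Qed.

Lemma mulmx3_entry m n p (M : 'M[C]_(m, n)) (A : 'M[C]_n) (N : 'M[C]_(n, p)) i j :
  (M *m A *m N) i j = (row i M *m A *m col j N) 0 0.
Proof.
rewrite !mxE; apply: eq_bigr => l _; rewrite !mxE; congr (_ * _).
by apply: eq_bigr => l' _; rewrite !mxE.
Qed.

Lemma adj_mulmx_ge0 n (w : 'cV[C]_n) : 0 <= (adj w *m w) 0 0.
Proof.
rewrite mxE; apply: sumr_ge0 => i _; rewrite !mxE mulrC; exact: mul_conjC_ge0.
Qed.

Lemma unitarymx_entry_le1 n (W : 'M[C]_n) i j :
  W *m adj W = 1%:M -> W i j * (W i j)^* <= 1.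
Proof.
move=> WW; have : \sum_l W i l * (W i l)^* = 1.
  have := congr1 (fun M : 'M[C]_n => M i i) WW; rewrite !mxE eqxx mulr1n => <-.
  by apply: eq_bigr => l _; rewrite !mxE.
rewrite (bigD1 j) //= => <-; rewrite lerDl.
by apply: sumr_ge0 => l _; exact: mul_conjC_ge0.
Qed.

Lemma density_spectral n (A : 'M[C]_n) : density A ->
  exists (P : 'M[C]_n) (D : 'rV[C]_n),
  [/\ A = adj P *m diag_mx D *m P, P *m adj P = 1%:M, adj P *m P = 1%:M,
      (forall i, 0 <= D 0 i) & \sum_i D 0 i = 1].
Proof.
move=> [[hA pA] trA].
have nA : A \is normalmx by apply/normalmxP; rewrite -adjE hA.
have := orthomx_spectralP nA.
set P := spectralmx A; set D := spectral_diag A => eA.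
have [PP1 PP2] := unitarymx_adj (spectral_unitarymx A).
rewrite invmx_unitary ?spectral_unitarymx // -adjE in eA.
have eD : P *m A *m adj P = diag_mx D.
  by rewrite eA !mulmxA PP1 mul1mx -mulmxA PP1 mulmx1.
exists P, D; split => //.
  move=> i; have := pA (col i (adj P)).
  suff -> : adj (col i (adj P)) = row i P.
    by rewrite -mulmx3_entry eD mxE eqxx mulr1n.
  by apply/matrixP=> a b; rewrite !mxE conjCK.
by rewrite -mxtrace_diag -eD mxtrace_mulC mulmxA PP2 mul1mx.
Qed.

Lemma density_diag_bound n (s : 'M[C]_n) x : density s -> 0 <= s x x <= 1.
Proof.
move=> [[_ ps] trs].
have s_ge0 y : 0 <= s y y.
  have := ps (col y 1%:M).
  suff -> : adj (col y 1%:M) = row y (1%:M : 'M[C]_n).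
    by rewrite -mulmx3_entry mul1mx mulmx1.
  by apply/matrixP=> a b; rewrite !mxE (@conjC_nat _ (b == y)) eq_sym.
rewrite s_ge0 /= -trs /mxtrace (bigD1 x) //= lerDl; exact: sumr_ge0.
Qed.

(* The sum is Tr(s t^T); with s = P^* D P and t = Q^* E Q it equals
   sum_ij D_i E_j |W_ij|^2 for the unitary W = P Q^T. *)
Lemma density_sum_mul_bound n (s t : 'M[C]_n) : density s -> density t ->
  0 <= \sum_a \sum_b s b a * t b a <= 1.
Proof.
move=> /density_spectral [P [D [eS PP1 _ D0 D1]]].
move=> /density_spectral [Q [E [eT _ QQ2 E0 E1]]].
pose W := P *m Q^T.
have WW : W *m adj W = 1%:M.
  rewrite adjM /W -mulmxA (mulmxA Q^T).
  have -> : Q^T *m adj Q^T = 1%:M.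
    have := congr1 trmx QQ2; rewrite trmx_mul trmx1 /adj trmxK => <-.
    by rewrite -map_trmx trmxK.
  by rewrite mul1mx PP1.
pose N i j := W i j * (W i j)^*.
have eN : \sum_a \sum_b s b a * t b a = \sum_i \sum_j D 0 i * E 0 j * N i j.
  have es b a : s b a = \sum_i (P i b)^* * D 0 i * P i a.
    by rewrite eS mxE; apply: eq_bigr => i _; rewrite mul_mx_diag !mxE.
  have et b a : t b a = \sum_j (Q j b)^* * E 0 j * Q j a.
    by rewrite eT mxE; apply: eq_bigr => i _; rewrite mul_mx_diag !mxE.
  under eq_bigr do under eq_bigr do rewrite es et big_distrlr /=.
  under eq_bigr do rewrite exchange_big /=.
  rewrite exchange_big /=.
  under eq_bigr do under eq_bigr do rewrite exchange_big /=.
  under eq_bigr do rewrite exchange_big /=.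
  apply: eq_bigr => i _; apply: eq_bigr => j _.
  rewrite /N /W !mxE rmorph_sum big_distrlr /= mulr_sumr.
  apply: eq_bigr => a _; rewrite mulr_sumr; apply: eq_bigr => b _.
  rewrite !mxE !rmorphM /=; ring.
rewrite eN; apply/andP; split.
  apply: sumr_ge0 => i _; apply: sumr_ge0 => j _.
  by apply: mulr_ge0; [exact: mulr_ge0 | exact: mul_conjC_ge0].
apply: (@le_trans _ _ (\sum_i \sum_j D 0 i * E 0 j)).
  apply: ler_sum => i _; apply: ler_sum => j _.
  by rewrite -[X in _ <= X]mulr1 ler_wpM2l ?mulr_ge0 ?unitarymx_entry_le1.
by rewrite -big_distrlr /= D1 E1 mulr1.
Qed.

Definition projector n (A : 'M[C]_n) : Prop := adj A = A /\ A *m A = A.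

Lemma projector_quad n (A : 'M[C]_n) (v : 'cV[C]_n) : projector A ->
  adj v *m A *m v = adj (A *m v) *m (A *m v).
Proof. by move=> [hA AA]; rewrite adjM hA !mulmxA -(mulmxA _ A A) AA. Qed.

Lemma projector_psd n (A : 'M[C]_n) : projector A -> psd A.
Proof. by move=> pA; split=> [|v]; [case: pA | rewrite projector_quad // adj_mulmx_ge0]. Qed.

Lemma projector_opnorm_le1 n (A : 'M[C]_n) : projector A -> opnorm_le1 A.
Proof.
move=> [hA AA] v; set B := 1%:M - A.
have pB : projector B.
  split; first by rewrite /B /adj map_mxB map_mx1 linearB /= trmx1 -/(adj A) hA.
  by rewrite /B mulmxBl mul1mx mulmxBr mulmx1 AA subrr subr0.
have -> : adj v *m v = adj v *m A *m v + adj v *m B *m v.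
  by rewrite -mulmxDl -mulmxDr /B addrC subrK mulmx1.
rewrite (projector_quad v pB) projector_quad //.
by rewrite [X in _ <= X]mxE lerDl adj_mulmx_ge0.
Qed.

Lemma projector_largest_eigenvalue n (A : 'M[C]_n) i :
  projector A -> row i A != 0 -> largest_eigenvalue A 1.
Proof.
move=> [_ AA] nz; split.
  by apply/eigenvalueP; exists (row i A) => //; rewrite -row_mul AA scale1r.
move=> b /eigenvalueP [v vA nv].
have : (b * b - b) *: v = 0.
  have := congr1 (mulmx^~ A) vA.
  rewrite -mulmxA AA vA -scalemxAl vA scalerA => e.
  by rewrite scalerBl e subrr.
move/eqP; rewrite scaler_eq0 (negbTE nv) orbF.
rewrite -[X in _ - X](mulr1 b) -mulrBr mulf_eq0.
by case/orP => [/eqP->|]; [exact: ler01 | rewrite subr_eq0 => /eqP->].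
Qed.

End States.

Section FullTerm.
Variables (R : realType) (d n k : nat).
Hypothesis nk : n = k.
Local Notation C := R[i].

Lemma card_eq_setT (S : {set 'I_n}) : (#|S| == k) = (S == setT).
Proof.
rewrite eqEcard subsetT cardsT card_ord /= -nk.
apply/eqP/idP => [->//|h]; apply/eqP; rewrite eqn_leq h andbT.
by rewrite -[X in (_ <= X)%N](card_ord n) max_card.
Qed.

Lemma acts_only_on_setT (A : 'M[C]_(qdim d n)) : acts_only_on setT A.
Proof.
have agree_inT (i j : 'I_(qdim d n)) : agree_in setT (cf i) (cf j) -> i = j.
  move/forallP=> eij; apply: enum_val_inj; apply/ffunP => q.
  by move: (eij q); rewrite in_setT => /eqP.
split=> [i j /negP [] | i j i' j' _ _ /agree_inT <- /agree_inT <- //].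
by apply/forallP => q; rewrite in_setT.
Qed.

Lemma hamiltonian_const (A : 'M[C]_(qdim d n)) : hamiltonian k (fun=> A) = A.
Proof. by rewrite /hamiltonian (big_pred1 setT) // => S; rewrite /= card_eq_setT. Qed.

Lemma klocal_instance_const (A : 'M[C]_(qdim d n)) :
  projector A -> klocal_instance k (fun=> A).
Proof.
move=> pA S /eqP; rewrite card_eq_setT => /eqP ->.
by split; [exact: acts_only_on_setT | exact: projector_psd | exact: projector_opnorm_le1].
Qed.

End FullTerm.

Section PairProjector.
Variables (R : realType) (d m r : nat) (z : 'I_d).
Local Notation C := R[i].
Local Notation n := (m + (m + r))%N.
Local Notation N := (qdim d n).

(* The configuration |a>|a>|z...z> of the two blocks and the spare qudits. *)
Definition pair_conf (a : {ffun 'I_m -> 'I_d}) : conf d n :=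
  [ffun q : 'I_n => match split q with inl j => a j
     | inr q' => match split q' with inl j => a j | inr _ => z end end].

Lemma pair_conf_l a j : pair_conf a (lshift (m + r) j) = a j.
Proof. by rewrite ffunE (unsplitK (inl _ j)). Qed.

Lemma pair_conf_m a j : pair_conf a (rshift m (lshift r j)) = a j.
Proof. by rewrite ffunE (unsplitK (inr _ (lshift r j))) (unsplitK (inl _ j)). Qed.

Lemma pair_conf_r a t : pair_conf a (rshift m (rshift m t)) = z.
Proof. by rewrite ffunE (unsplitK (inr _ (rshift m t))) (unsplitK (inr _ t)). Qed.

Lemma pair_conf_inj : injective pair_conf.
Proof. by move=> a b e; apply/ffunP => j; rewrite -!pair_conf_l e. Qed.

Definition pair_ind (x : conf d n) : C := (x \in pair_conf @: setT)%:R.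

Lemma pair_ind_conf a : pair_ind (pair_conf a) = 1.
Proof. by rewrite /pair_ind imset_f ?in_setT. Qed.

Lemma sum_basis (F : conf d n -> C) : \sum_(i < N) F (cf i) = \sum_x F x.
Proof.
by symmetry; rewrite (reindex (@cf d n)) //; apply: onW_bij; exact: enum_val_bij.
Qed.

Lemma sum_pair_ind (F : conf d n -> C) :
  \sum_x pair_ind x * F x = \sum_a F (pair_conf a).
Proof.
rewrite (eq_bigr (fun x => if x \in pair_conf @: setT then F x else 0)); last first.
  by move=> x _; rewrite /pair_ind; case: ifP; rewrite ?mul1r ?mul0r.
rewrite -big_mkcond /= big_imset /=; last by move=> a b _ _; apply: pair_conf_inj.
by apply: eq_bigl => a; rewrite in_setT.
Qed.

Definition pair_proj : 'M[C]_N :=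
  \matrix_(i, j) ((d ^ m)%:R^-1 * (pair_ind (cf i) * pair_ind (cf j))).

Lemma pair_proj_projector : (0 < d)%N -> projector pair_proj.
Proof.
move=> d_gt0; have dm_neq0 : (d ^ m)%:R != 0 :> C by rewrite pnatr_eq0 -lt0n expn_gt0 d_gt0.
split.
  apply/matrixP => i j; rewrite !mxE !rmorphM /= fmorphV /= /pair_ind !conjC_nat.
  by rewrite (mulrC (_%:R)).
have sum_ind2 : \sum_(l < N) pair_ind (cf l) * pair_ind (cf l) = (d ^ m)%:R.
  rewrite (sum_basis (fun y => pair_ind y * pair_ind y)) sum_pair_ind.
  under eq_bigr do rewrite pair_ind_conf.
  by rewrite sumr_const card_ffun !card_ord.
apply/matrixP => i j; rewrite !mxE.
have regroup (c x y w : C) : c * (x * w) * (c * (w * y)) = c * (x * y) * (c * (w * w)).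
  by ring.
under eq_bigr do rewrite !mxE regroup.
by rewrite -!mulr_sumr sum_ind2 mulVf // mulr1.
Qed.

Lemma pair_proj_row_neq0 : (0 < d)%N -> exists i, row i pair_proj != 0.
Proof.
move=> d_gt0; pose x := pair_conf [ffun _ => z]; exists (enum_rank x).
apply/negP => /eqP /matrixP /(_ 0 (enum_rank x)).
rewrite !mxE /cf enum_rankK pair_ind_conf !mulr1 => /eqP.
by rewrite invr_eq0 pnatr_eq0 expn_eq0 gtn_eqF.
Qed.

Lemma tr_pair_proj_product_state (s : 'I_n -> 'M[C]_d) :
  \tr (pair_proj *m product_state s) = (d ^ m)%:R^-1 *
    \sum_a \sum_b \prod_(q < n) s q (pair_conf b q) (pair_conf a q).
Proof.
pose Px y x := \prod_(q < n) s q (y q) (x q).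
transitivity ((d ^ m)%:R^-1 * \sum_(i < N) pair_ind (cf i) *
                \sum_(l < N) pair_ind (cf l) * Px (cf l) (cf i)).
  rewrite /mxtrace mulr_sumr; apply: eq_bigr => i _; rewrite mxE !mulr_sumr.
  by apply: eq_bigr => l _; rewrite !mxE /Px; ring.
congr (_ * _).
under eq_bigr => i _ do rewrite (sum_basis (fun y => pair_ind y * Px y (cf i))) sum_pair_ind.
by rewrite (sum_basis (fun x => pair_ind x * \sum_b Px (pair_conf b) x)) sum_pair_ind.
Qed.

Lemma prod_pair_conf (s : 'I_n -> 'M[C]_d) a b :
  \prod_(q < n) s q (pair_conf b q) (pair_conf a q) =
  \prod_(j < m) (s (lshift (m + r) j) (b j) (a j) * s (rshift m (lshift r j)) (b j) (a j))
  * \prod_(t < r) s (rshift m (rshift m t)) z z.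
Proof.
rewrite big_split_ord /= big_split_ord /= big_split /= mulrA.
by congr (_ * _ * _); apply: eq_bigr => j _; rewrite ?pair_conf_l ?pair_conf_m ?pair_conf_r.
Qed.

Lemma tr_pair_proj_product_state_le (s : 'I_n -> 'M[C]_d) :
  (forall q, density (s q)) -> \tr (pair_proj *m product_state s) <= 1 / (d ^ m)%:R.
Proof.
move=> hs; rewrite tr_pair_proj_product_state div1r.
under eq_bigr do under eq_bigr do rewrite prod_pair_conf.
rewrite -[X in _ <= X]mulr1 ler_wpM2l ?invr_ge0 ?ler0n //.
under eq_bigr do rewrite -mulr_suml.
rewrite -mulr_suml.
pose F j (x y : 'I_d) := s (lshift (m + r) j) y x * s (rshift m (lshift r j)) y x.
have -> : \sum_(a : {ffun 'I_m -> 'I_d}) \sum_(b : {ffun 'I_m -> 'I_d})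
             \prod_(j < m) F j (a j) (b j) = \prod_(j < m) \sum_x \sum_y F j x y.
  by rewrite bigA_distr_bigA /=; apply: eq_bigr => a _; rewrite bigA_distr_bigA.
have hF j := density_sum_mul_bound (hs (lshift (m + r) j)) (hs (rshift m (lshift r j))).
have hz t := density_diag_bound z (hs (rshift m (rshift m t))).
apply: mulr_ile1.
- by apply: prodr_ge0 => j _; case/andP: (hF j).
- by apply: prodr_ge0 => t _; case/andP: (hz t).
- by apply: prodr_ile1 => j _; apply: hF.
- by apply: prodr_ile1 => t _; apply: hz.
Qed.

End PairProjector.

Theorem mainTheorem8 (R : realType) (d k : nat) (hd : (2 <= d)%N) (hk : (2 <= k)%N) :
  exists (n : nat) (h : {set 'I_n} -> 'M[R[i]]_(qdim d n)) (OPT : R[i]),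
    [/\ klocal_instance k h,
        largest_eigenvalue (hamiltonian k h) OPT,
        0 < OPT &
        forall s : 'I_n -> 'M[R[i]]_d,
          (forall q, density (s q)) ->
          \tr (hamiltonian k h *m product_state s) <= OPT / (d ^ (k./2))%:R].
Proof.
have d_gt0 : (0 < d)%N by apply: ltnW.
have nk : (k./2 + (k./2 + odd k))%N = k by rewrite addnA addnn addnC odd_double_half.
pose P := pair_proj R (k./2) (odd k) (Ordinal d_gt0).
have projP : projector P by exact: pair_proj_projector.
exists (k./2 + (k./2 + odd k))%N, (fun=> P), 1; rewrite hamiltonian_const //; split.
- exact: klocal_instance_const.
- have [i Pi] := pair_proj_row_neq0 R (k./2) (odd k) (Ordinal d_gt0) d_gt0.
  exact: projector_largest_eigenvalue Pi.
- exact: ltr01.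
- exact: tr_pair_proj_product_state_le.
Qed.
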